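(* Let $H=\sum_{\mathbf{j}\in V}h_{\mathbf{j}}$ be a Hamiltonian whose frustration graph $G$ is claw-free and contains a simplicial clique $K_s$, and let $\chi$ be a simplicial mode with respect to $K_s$. Then \[ T_G(u)\Big(1+u\sum_{\mathbf{j}\in K_s}h_{\mathbf{j}}\Big)\chi\,T_G(-u)=Z_G(-u^2)\Big(1-u\sum_{\mathbf{j}\in K_s}h_{\mathbf{j}}\Big)\chi . \]
   Context: Setting: $V$ a finite set of distinct $n$-qubit Pauli strings, $H=\sum_{\mathbf{j}\in V}h_{\mathbf{j}}$ with $h_{\mathbf{j}}=b_{\mathbf{j}}\sigma^{\mathbf{j}}$, $b_{\mathbf{j}}\in\mathbb{R}\setminus\{0\}$; frustration graph $G$: edge iff terms anticommute; claw-free: no induced $K_{1,3}$. Simplicial clique: clique $K_s$ with $\Gamma(\mathbf{j})\setminus K_s$ a clique for every $\mathbf{j}\in K_s$. Simplicial mode: Pauli operator $\chi=\sigma^{\mathbf{j}^*}$, $\mathbf{j}^*\notin V$, anticommuting with $h_{\mathbf{k}}$ iff $\mathbf{k}\in K_s$. For an independent set $S$, $h_S=\prod_{\mathbf{j}\in S}h_{\mathbf{j}}$; $T_G(u)=\sum_S(-u)^{|S|}h_S$ over all independent sets of $G$; $Z_G(-u^2)=T_G(u)T_G(-u)$. *)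

From HB Require Import structures.
From mathcomp Require Import all_boot all_order all_algebra all_field.
Set Implicit Arguments. Unset Strict Implicit. Unset Printing Implicit Defensive.
Import Order.TTheory GRing.Theory Num.Theory.
Local Open Scope ring_scope.

(* An n-qubit Pauli string: a word j in {0,1,2,3}^n (0=I, 1=X, 2=Y, 3=Z). *)
Definition pauli_string (n : nat) := {ffun 'I_n -> 'I_4}.

(* Entry (r,c) (r,c in {0,1}, false = 0) of the single-qubit Pauli matrix. *)
Definition pauli1 (a : 'I_4) (r c : bool) : algC :=
  match nat_of_ord a with
  | 0%N => if r == c then 1 else 0
  | 1%N => if r == c then 0 else 1
  | 2%N => if r == c then 0 else if r then 'i else - 'i
  | _   => if r == c then (if r then -1 else 1) else 0
  end.

Definition bitk (k i : nat) : bool := odd (i %/ 2 ^ k).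

(* sigma^j = sigma^{j_0} (x) ... (x) sigma^{j_{n-1}}, as a 2^n x 2^n matrix
   (qubit k corresponds to bit k of the basis index). *)
Definition sigma (n : nat) (j : pauli_string n) : 'M[algC]_(2 ^ n) :=
  \matrix_(r, c) \prod_(k < n) pauli1 (j k) (bitk k r) (bitk k c).

Definition hterm (n : nat) (b : pauli_string n -> algC) (j : pauli_string n)
  : 'M[algC]_(2 ^ n) := b j *: sigma j.

(* Anticommutation of Pauli strings (equivalently of the terms, as b_j != 0). *)
Definition anticomm (n : nat) (j k : pauli_string n) : bool :=
  sigma j *m sigma k == - (sigma k *m sigma j).

Definition fadj (n : nat) (j k : pauli_string n) : bool :=
  (j != k) && anticomm j k.

Definition is_clique (n : nat) (C : {set pauli_string n}) : bool :=
  [forall j in C, forall k in C, (j != k) ==> fadj j k].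

Definition is_independent (n : nat) (S : {set pauli_string n}) : bool :=
  [forall j in S, forall k in S, ~~ fadj j k].

Definition claw_free (n : nat) (V : {set pauli_string n}) : Prop :=
  ~ exists j a b c,
      [/\ [&& j \in V, a \in V, b \in V & c \in V],
          [&& fadj j a, fadj j b & fadj j c],
          [&& a != b, a != c & b != c] &
          [&& ~~ fadj a b, ~~ fadj a c & ~~ fadj b c]].

Definition nbhd (n : nat) (V : {set pauli_string n}) (j : pauli_string n)
  : {set pauli_string n} := [set k in V | fadj j k].

Definition simplicial_clique (n : nat) (V K : {set pauli_string n}) : Prop :=
  [/\ K \subset V, is_clique K &
      forall j, j \in K -> is_clique (nbhd V j :\: K)].

Definition simplicial_mode (n : nat) (V K : {set pauli_string n})
  (jstar : pauli_string n) : Prop :=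
  jstar \notin V /\ forall k, k \in V -> (anticomm jstar k <-> k \in K).

Definition hS (n : nat) (b : pauli_string n -> algC) (S : {set pauli_string n})
  : 'M[algC]_(2 ^ n) := \prod_(j in S) hterm b j.

Definition TG (n : nat) (V : {set pauli_string n}) (b : pauli_string n -> algC)
  (u : algC) : 'M[algC]_(2 ^ n) :=
  \sum_(S in powerset V | is_independent S) (- u) ^+ #|S| *: hS b S.

(* Z_G(-u^2) := T_G(u) T_G(-u)  (ZG u denotes Z_G(-u^2)). *)
Definition ZG (n : nat) (V : {set pauli_string n}) (b : pauli_string n -> algC)
  (u : algC) : 'M[algC]_(2 ^ n) := TG V b u * TG V b (- u).

From HB Require Import structures.
From mathcomp Require Import all_boot all_order all_algebra all_field.
Set Implicit Arguments. Unset Strict Implicit. Unset Printing Implicit Defensive.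
Import Order.TTheory GRing.Theory Num.Theory.
Local Open Scope ring_scope.

(* Multiplying on the left by T_G(u), it suffices that (1 + g) chi T = T (1 - g) chi for
   T = T_G(-u) and g = u sum_{k in K} h_k.  Split the independent sets of G by how they
   meet the clique K: T = A + B, where A collects the sets avoiding K and
   B = u sum_{q in K} h_q T_{G - N[q]}(-u).  The mode chi commutes with A and anticommutes
   with B, so (1 + g) chi T = (1 + g)(A - B) chi, and (1 + g)(A - B) = (A + B)(1 - g)
   follows from g A + A g = 2 B and g B = B g.  Both rest on one observation: if the
   neighbours of x in W form a clique, h_x anticommutes with the terms of T_W containing
   one of them and commutes with the others, so h_x T_W + T_W h_x = 2 h_x T_{W - N(x)};
   simpliciality of K provides these cliques. *)

Section NoncommutativeRing.
Variable R : pzRingType.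

Definition anticommute (x y : R) := x * y = - (y * x).

Lemma anticommuteMr x y z : anticommute x y -> GRing.comm x z -> anticommute x (y * z).
Proof. by move=> xy xz; rewrite /anticommute mulrA xy mulNr -mulrA xz mulrA. Qed.

Lemma anticommute_sumr x (I : Type) (r : seq I) (P : pred I) (F : I -> R) :
  (forall i, P i -> anticommute x (F i)) -> anticommute x (\sum_(i <- r | P i) F i).
Proof. by move=> xF; rewrite /anticommute mulr_sumr mulr_suml -sumrN; apply: eq_bigr. Qed.

Lemma big_rem_commute (I : eqType) (r : seq I) (P : pred I) (F : I -> R) x :
  uniq r -> x \in r -> P x -> (forall y, P y -> GRing.comm (F x) (F y)) ->
  \prod_(y <- r | P y) F y = F x * \prod_(y <- r | P y && (y != x)) F y.
Proof.
move=> + + Px xF; elim: r => [|y r IH] //= /andP[yr ur].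
rewrite inE !big_cons; case: (eqVneq x y) => [exy _ | xy /= xr].
  subst y; rewrite Px /=; congr (_ * _); rewrite big_seq_cond [RHS]big_seq_cond.
  by apply: eq_bigl => z; case: eqVneq => [->|]; rewrite ?(negbTE yr) ?andbT ?andbF.
by rewrite IH // andbT; case: ifP => // Py; rewrite !mulrA xF.
Qed.

Lemma prod_setU1_commute (I : finType) (F : I -> R) (S : {set I}) x :
  x \notin S -> {in S, forall y, GRing.comm (F x) (F y)} ->
  \prod_(y in x |: S) F y = F x * \prod_(y in S) F y.
Proof.
move=> xS xF; rewrite (@big_rem_commute _ _ _ _ x) ?setU11 ?index_enum_uniq ?mem_index_enum //.
  congr (_ * _); apply: eq_bigl => y; rewrite !inE.
  by case: (eqVneq y x) => [->|_]; rewrite ?eqxx ?(negbTE xS) ?andbT ?andbF.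
by move=> y; rewrite !inE => /orP[/eqP->|/xF].
Qed.

Lemma anticommutator_transfer (g A B : R) :
  g * A + A * g = B *+ 2 -> GRing.comm g B -> (1 + g) * (A - B) = (A + B) * (1 - g).
Proof.
move=> gA gB; have gAE : g * A = B *+ 2 - A * g by rewrite -gA addrK.
rewrite mulrDl mul1r mulrBr gAE gB mulrDl !mulrBr !mulr1 mulr2n.
by rewrite !addrA subrK [A + B - _]addrAC.
Qed.

End NoncommutativeRing.

Lemma sum_antisym_eq0 (V : zmodType) (I : eqType) (r : seq I) (f : I -> I -> V) :
  {in r, forall i, f i i = 0} -> {in r &, forall i j, f j i = - f i j} ->
  \sum_(i <- r) \sum_(j <- r) f i j = 0.
Proof.
elim: r => [|x r IH] f0 fN; first by rewrite big_nil.
under eq_bigr => i _ do rewrite big_cons.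
rewrite big_cons big_split /= IH => [|i ir|i j ir jr]; last first.
- by apply: fN; rewrite inE ?ir ?jr orbT.
- by apply: f0; rewrite inE ir orbT.
rewrite addr0 f0 ?mem_head // add0r -big_split big1_seq // => i /= ir.
by rewrite fN ?mem_head ?inE ?ir ?orbT // addNr.
Qed.

Section FrustrationGraph.
Variables (T : finType) (e : rel T).

Definition independent (S : {set T}) : bool := [forall j in S, forall k in S, ~~ e j k].

Definition clique (C : {set T}) : bool :=
  [forall j in C, forall k in C, (j != k) ==> e j k].

Definition nbr (x : T) : {set T} := [set y | e x y].

Definition cnbr (x : T) : {set T} := x |: nbr x.

Definition simplicial (V K : {set T}) : Prop :=
  [/\ K \subset V, clique K & forall j, j \in K -> clique ([set k in V | e j k] :\: K)].

Lemma independentP (S : {set T}) : reflect {in S &, forall j k, ~~ e j k} (independent S).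
Proof.
apply: (iffP forallP) => [H j k jS kS | H j].
  by move/implyP: (H j) => /(_ jS) /forallP /(_ k) /implyP /(_ kS).
by apply/implyP => jS; apply/forallP => k; apply/implyP; apply: H.
Qed.

Lemma cliqueP (C : {set T}) : reflect {in C &, forall j k, j != k -> e j k} (clique C).
Proof.
apply: (iffP forallP) => [H j k jC kC | H j].
  by move/implyP: (H j) => /(_ jC) /forallP /(_ k) /implyP /(_ kC) /implyP.
by apply/implyP => jC; apply/forallP => k; apply/implyP => kC; apply/implyP; apply: H.
Qed.

Lemma subset_clique (C C' : {set T}) : C' \subset C -> clique C -> clique C'.
Proof. by move=> /subsetP sCC' /cliqueP cC; apply/cliqueP => j k /sCC' jC /sCC'; apply: cC. Qed.

Lemma clique_independent_eq (C S : {set T}) j k :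
  clique C -> independent S -> j \in C :&: S -> k \in C :&: S -> j = k.
Proof.
move=> /cliqueP cC /independentP iS; rewrite !inE => /andP[jC jS] /andP[kC kS].
by apply/eqP; apply: contraNT (iS j k jS kS); apply: cC.
Qed.

Lemma clique_setU_nbr (K : {set T}) k : clique K -> k \in K -> K :|: nbr k = cnbr k.
Proof.
move=> /cliqueP cK kK; apply/setP => y; rewrite !inE.
case: eqVneq => [->|ky]; first by rewrite kK.
by case yK: (y \in K); rewrite //= (cK k y kK yK) // eq_sym.
Qed.

Hypotheses (e_sym : symmetric e) (e_irr : irreflexive e).

Lemma independent_setU1 x (S : {set T}) :
  independent (x |: S) = independent S && [disjoint S & nbr x].
Proof.
rewrite disjoint_subset; apply/independentP/andP => [ixS | [/independentP iS /subsetP Sx]].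
  split; first by apply/independentP => j k jS kS; apply: ixS; rewrite setU1r.
  by apply/subsetP => y yS; rewrite !inE e_sym ixS ?setU11 ?setU1r.
have nx y : y \in S -> ~~ e x y by move=> /Sx; rewrite !inE.
move=> j k; rewrite !inE => /orP[/eqP->|jS] /orP[/eqP->|kS]; rewrite ?e_irr ?nx //.
  by rewrite e_sym nx.
exact: iS.
Qed.

Lemma cnbrU_nbr j k : e j k -> cnbr j :|: nbr k = nbr j :|: nbr k.
Proof.
by move=> ejk; rewrite /cnbr -setUA; apply/setUidPr; rewrite sub1set !inE e_sym ejk orbT.
Qed.

End FrustrationGraph.

Section IndependenceSum.
Variables (T : finType) (e : rel T) (R : pzRingType) (t : T -> R).
Hypotheses (e_sym : symmetric e) (e_irr : irreflexive e).
Hypothesis t_comm : forall x y, ~~ e x y -> GRing.comm (t x) (t y).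
Hypothesis t_anti : forall x y, e x y -> anticommute (t x) (t y).

(* With [t j = - u * h_j] this is T_{G[W]}(u). *)
Definition indep_sum (W : {set T}) : R :=
  \sum_(S in powerset W | independent e S) \prod_(j in S) t j.

Lemma commr_indep_sum x (W : {set T}) :
  {in W, forall y, GRing.comm x (t y)} -> GRing.comm x (indep_sum W).
Proof.
move=> xW; apply: commr_sum => S /andP[]; rewrite inE => /subsetP SW _.
by apply: commr_prod => y /SW /xW.
Qed.

Lemma commr_indep_sum_nbr x (W : {set T}) : GRing.comm (t x) (indep_sum (W :\: nbr e x)).
Proof. by apply: commr_indep_sum => y; rewrite !inE => /andP[/t_comm]. Qed.

Lemma sum_independent_mem (W : {set T}) q : q \in W ->
  \sum_(S in powerset W | independent e S && (q \in S)) \prod_(j in S) t j =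
  t q * indep_sum (W :\: cnbr e q).
Proof.
move=> qW; rewrite /indep_sum mulr_sumr.
rewrite (reindex_onto (fun S => q |: S) (fun S => S :\ q)) /=; last first.
  by move=> S /andP[_ /andP[_ qS]]; rewrite setD1K.
have U1K S : ((q |: S) :\ q == S) = (q \notin S).
  by apply/eqP/idP => [<-|/setU1K//]; rewrite !inE eqxx.
apply: eq_big => [S | S /andP[/andP[_ /andP[]]]].
  rewrite setU11 U1K andbT !powersetE subUset sub1set qW independent_setU1 //.
  rewrite /cnbr -setDDl !subsetD [[disjoint S & [set q]]]disjoint_sym disjoints1.
  by case: (S \subset W) (q \in S) (independent e S) [disjoint _ & _] => [] [] [] [].
rewrite independent_setU1 // disjoint_subset => /andP[_ /subsetP Sq] _.
rewrite U1K => qS; apply: prod_setU1_commute => // y /Sq.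
by rewrite !inE => /t_comm.
Qed.

Lemma indep_sum_split_clique (W Q : {set T}) : Q \subset W -> clique e Q ->
  indep_sum W = indep_sum (W :\: Q) + \sum_(q in Q) t q * indep_sum (W :\: cnbr e q).
Proof.
move=> /subsetP QW cQ; pose P (S : {set T}) := \prod_(j in S) t j.
under [in RHS]eq_bigr => q qQ do rewrite -(sum_independent_mem (QW q qQ)).
rewrite (exchange_big_dep (fun S => (S \in powerset W) && independent e S)) /=; last first.
  by move=> q S _ /andP[-> /andP[->]].
have meetQ S : independent e S ->
    P S = (if [disjoint S & Q] then P S else 0) + \sum_(q in Q | q \in S) P S.
  move=> iS; case: (boolP [disjoint S & Q]) => [SQ | ].
    rewrite big_pred0 ?addr0 // => q; rewrite andbC.
    by case qS: (q \in S); rewrite // (disjointFr SQ qS).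
  rewrite -setI_eq0 setIC => /set0Pn[q0 q0QS]; rewrite add0r (big_pred1 q0) // => q.
  apply/andP/eqP => [[qQ qS] | ->]; last by move: q0QS; rewrite inE => /andP.
  by apply: (clique_independent_eq cQ iS) q0QS; rewrite inE qQ qS.
rewrite /indep_sum [LHS](eq_bigr _ (fun S HS => meetQ S (andP HS).2)) big_split /=.
congr (_ + _); last by apply: eq_bigr => S /andP[pwS iS]; apply: eq_bigl => q; rewrite pwS iS.
by rewrite -big_mkcondr; apply: eq_bigl => S; rewrite !inE subsetD andbAC.
Qed.

Lemma indep_sum_anticommutator x (W : {set T}) : clique e (W :&: nbr e x) ->
  t x * indep_sum W + indep_sum W * t x = (t x * indep_sum (W :\: nbr e x)) *+ 2.
Proof.
move=> cQ; have /cliqueP cQ' := cQ.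
rewrite (indep_sum_split_clique (subsetIl W (nbr e x)) cQ) setDIr setDv set0U.
set B := \sum_(q in _) _.
have xB : anticommute (t x) B.
  apply: anticommute_sumr => q; rewrite !inE => /andP[qW exq].
  apply: anticommuteMr (t_anti exq) _; apply: commr_indep_sum => y.
  rewrite !inE negb_or => /andP[/andP[yq nqy] yW].
  apply: t_comm; apply: contra nqy => exy.
  by apply: cQ'; rewrite ?inE ?qW ?yW ?exq ?exy // eq_sym.
by rewrite mulrDr mulrDl addrACA xB addNr addr0 -(commr_indep_sum_nbr x W) mulr2n.
Qed.

Section SimplicialClique.
Variables (V K : {set T}).
Hypothesis simpK : simplicial e V K.

Local Notation g := (\sum_(k in K) t k).
Local Notation C j := (indep_sum (V :\: cnbr e j)).
Local Notation B := (\sum_(q in K) t q * C q).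

Lemma simplicial_anticommutator :
  g * indep_sum (V :\: K) + indep_sum (V :\: K) * g = B *+ 2.
Proof.
case: simpK => KV cK cN.
rewrite mulr_suml mulr_sumr -big_split -sumrMnl; apply: eq_bigr => k kK /=.
rewrite indep_sum_anticommutator ?setDDl ?clique_setU_nbr //.
apply: subset_clique (cN k kK); apply/subsetP => y; rewrite !inE.
by case/andP => /andP[-> ->] ->.
Qed.

Lemma simplicial_commutator_term k j : k \in K -> j \in K -> k != j ->
  t k * (t j * C j) - t j * C j * t k =
  - (t j * (t k * indep_sum (V :\: (nbr e j :|: nbr e k)))) *+ 2.
Proof.
case: simpK => KV /cliqueP cK cN kK jK kj; have ekj : e k j by rewrite cK.
have cQ : clique e ((V :\: cnbr e j) :&: nbr e k).
  apply: subset_clique (cN k kK); apply/subsetP => y; rewrite !inE negb_or.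
  case/andP => /andP[/andP[yj nejy] ->] eky; rewrite eky !andbT.
  by apply: contra nejy => yK; rewrite cK // eq_sym.
have := indep_sum_anticommutator cQ; rewrite setDDl cnbrU_nbr 1?e_sym // => anti.
by rewrite mulrA (t_anti ekj) mulNr -mulrA -mulrA -opprD -mulrDr anti mulrnAr mulNrn.
Qed.

Lemma commr_simplicial : GRing.comm g B.
Proof.
apply/eqP; rewrite -subr_eq0; apply/eqP.
pose D k j := t k * (t j * C j) - t j * C j * t k.
have -> : g * B - B * g = \sum_(k in K) \sum_(j in K) D j k.
  rewrite mulr_suml mulr_sumr -sumrB; apply: eq_bigr => k _.
  by rewrite mulr_suml [_ * g]mulr_sumr -sumrB.
have Dkk k : D k k = 0.
  have kC : GRing.comm (t k) (C k).
    by apply: commr_indep_sum => y; rewrite !inE negb_or => /andP[/andP[_ /t_comm]].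
  by rewrite /D -mulrA -kC subrr.
rewrite -big_enum; under eq_bigr do rewrite -big_enum.
apply: sum_antisym_eq0 => [k _ | k j]; rewrite ?mem_enum // => kK jK.
have [<-|kj] := eqVneq k j; first by rewrite Dkk oppr0.
case: simpK => _ /cliqueP cK _; have ekj : e k j by rewrite cK.
rewrite /D !simplicial_commutator_term // 1?eq_sym // setUC -mulNrn opprK.
by rewrite !mulrA (t_anti ekj) mulNr.
Qed.

Lemma simplicial_mode_transfer (chi : R) :
  {in V :\: K, forall k, GRing.comm chi (t k)} -> {in K, forall k, anticommute chi (t k)} ->
  (1 + g) * chi * indep_sum V = indep_sum V * (1 - g) * chi.
Proof.
move=> chiVK chiK; have [KV cK' _] := simpK; have /cliqueP cK := cK'.
have chiA : GRing.comm chi (indep_sum (V :\: K)) by apply: commr_indep_sum.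
have chiB : anticommute chi B.
  apply: anticommute_sumr => q qK; apply: anticommuteMr (chiK q qK) _.
  apply: commr_indep_sum => y; rewrite !inE negb_or => /andP[/andP[yq nqy] yV].
  apply: chiVK; rewrite !inE yV andbT; apply: contra nqy => yK.
  by rewrite cK // eq_sym.
rewrite (indep_sum_split_clique KV cK') -mulrA mulrDr chiA chiB -mulrBl mulrA.
by congr (_ * _); apply: anticommutator_transfer;
  [apply: simplicial_anticommutator | apply: commr_simplicial].
Qed.

End SimplicialClique.

End IndependenceSum.

Lemma big_ord_double (V : nmodType) (F : nat -> V) N :
  \sum_(m < N.*2) F m = \sum_(m < N) (F m.*2 + F m.*2.+1).
Proof.
elim: N => [|N IH]; first by rewrite !big_ord0.
by rewrite doubleS !big_ord_recr /= IH addrA.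
Qed.

Lemma sum_prod_bits (R : comPzSemiRingType) n (f : 'I_n -> bool -> R) :
  \sum_(m < 2 ^ n) \prod_(k < n) f k (bitk k m) =
  \prod_(k < n) (f k false + f k true).
Proof.
elim: n f => [|n IH] f; first by rewrite big_ord1 !big_ord0.
rewrite big_ord_recl -(IH (fun k => f (lift ord0 k))) mulr_sumr.
rewrite expnS mul2n (big_ord_double (fun m => \prod_(k < n.+1) f k (bitk k m))).
apply: eq_bigr => m _.
rewrite mulrDl !big_ord_recl /bitk !expn0 !divn1 /= odd_double.
congr (_ * _ + _ * _); apply: eq_bigr => k _;
  by rewrite /bump /= add1n expnS divnMA divn2 /= ?doubleK ?uphalf_double.
Qed.

Definition pauli1_mul (a b : 'I_4) (r c : bool) : algC :=
  pauli1 a r false * pauli1 b false c + pauli1 a r true * pauli1 b true c.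

Definition pauli1_sign (a b : 'I_4) : algC :=
  if [|| a == 0 :> nat, b == 0 :> nat | a == b] then 1 else -1.

Lemma pauli1_mulC a b r c : pauli1_mul a b r c = pauli1_sign a b * pauli1_mul b a r c.
Proof.
have ii : 'i * 'i = -1 :> algC by rewrite -expr2 sqrCi.
case: a => [[|[|[|[|a]]]] ?] //; case: b => [[|[|[|[|b]]]] ?] //; case: r; case: c;
  by rewrite /pauli1_mul /pauli1_sign /pauli1 /= ?(mul0r, mulr0, mul1r, mulr1, addr0,
       add0r, mulN1r, mulrN1, mulrN, mulNr, opprK, oppr0, ii).
Qed.

Lemma sigma_mulE n (j l : pauli_string n) :
  sigma j *m sigma l =
  \matrix_(r, c) \prod_(k < n) pauli1_mul (j k) (l k) (bitk k r) (bitk k c).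
Proof.
apply/matrixP => r c; rewrite !mxE -(sum_prod_bits (fun k x =>
  pauli1 (j k) (bitk k r) x * pauli1 (l k) x (bitk k c))).
by apply: eq_bigr => m _; rewrite !mxE -big_split.
Qed.

Lemma sigma_mulC n (j l : pauli_string n) :
  sigma j *m sigma l = (\prod_(k < n) pauli1_sign (j k) (l k)) *: (sigma l *m sigma j).
Proof.
apply/matrixP => r c; rewrite !sigma_mulE !mxE -big_split.
by apply: eq_bigr => k _; rewrite pauli1_mulC.
Qed.

Lemma sigma_commute n (j l : pauli_string n) :
  ~~ anticomm j l -> GRing.comm (sigma j) (sigma l).
Proof.
rewrite /anticomm => nanti; change (sigma j *m sigma l = sigma l *m sigma j).
move: nanti; rewrite sigma_mulC.
have /pred2P[->|->] : (\prod_(k < n) pauli1_sign (j k) (l k)) \in pred2 1 (-1).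
- apply: (big_ind (fun x : algC => x \in pred2 1 (-1))) => [|x y|k _]; rewrite !inE.
  + by rewrite eqxx.
  + by move=> /orP[]/eqP-> /orP[]/eqP->; rewrite ?mulr1 ?mulrN1 ?opprK eqxx ?orbT.
  + by rewrite /pauli1_sign; case: ifP; rewrite eqxx ?orbT.
- by rewrite scale1r.
- by rewrite scaleN1r eqxx.
Qed.

Lemma mulmxZZ (R : comPzRingType) m (a c : R) (A B : 'M[R]_m) :
  (a *: A) * (c *: B) = (a * c) *: (A * B).
Proof.
change ((a *: A) *m (c *: B) = (a * c) *: (A *m B)).
by rewrite -scalemxAl -scalemxAr scalerA.
Qed.

Lemma prod_scalemx (R : comPzRingType) m (I : finType) (S : {set I}) (c : I -> R)
    (A : I -> 'M[R]_m) :
  \prod_(j in S) (c j *: A j) = (\prod_(j in S) c j) *: \prod_(j in S) A j.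
Proof. by elim/big_rec3: _ => [|j x y z _ ->]; rewrite ?scale1r ?mulmxZZ. Qed.

Section PauliTerms.
Variable n : nat.
Implicit Types (j k : pauli_string n) (c d : algC).

Lemma fadj_sym : symmetric (@fadj n).
Proof.
move=> j k; rewrite /fadj /anticomm eq_sym; case: (k != j) => //=.
by apply/eqP/eqP => ->; rewrite opprK.
Qed.

Lemma fadj_irr : irreflexive (@fadj n).
Proof. by move=> j; rewrite /fadj eqxx. Qed.

Lemma sigma_commZ c d j k : ~~ anticomm j k -> GRing.comm (c *: sigma j) (d *: sigma k).
Proof. by move/sigma_commute => jk; rewrite /GRing.comm !mulmxZZ jk mulrC. Qed.

Lemma sigma_anticommZ c d j k : anticomm j k -> anticommute (c *: sigma j) (d *: sigma k).
Proof.
move/eqP => jk; have {}jk : sigma j * sigma k = - (sigma k * sigma j) := jk.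
by rewrite /anticommute !mulmxZZ jk scalerN mulrC.
Qed.

Lemma fadj_commZ c d j k : ~~ fadj j k -> GRing.comm (c *: sigma j) (d *: sigma k).
Proof.
rewrite /fadj negb_and negbK => /orP[/eqP-> | ]; last exact: sigma_commZ.
by rewrite /GRing.comm !mulmxZZ mulrC.
Qed.

End PauliTerms.

Lemma TG_opp_indep_sum n (V : {set pauli_string n}) b v :
  TG V b (- v) = indep_sum (@fadj n) (fun j => (v * b j) *: sigma j) V.
Proof.
rewrite /TG /indep_sum; apply: eq_bigr => S _.
by rewrite /hS /hterm !prod_scalemx big_split prodr_const scalerA opprK.
Qed.

Theorem lemma12 (n : nat) (V : {set pauli_string n})
  (b : pauli_string n -> algC) (K : {set pauli_string n})
  (jstar : pauli_string n) (u : algC) :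
  (forall j, j \in V -> b j \is Num.real /\ b j != 0) ->
  claw_free V ->
  simplicial_clique V K ->
  simplicial_mode V K jstar ->
  TG V b u * (1 + u *: \sum_(j in K) hterm b j) * sigma jstar * TG V b (- u)
  = ZG V b u * (1 - u *: \sum_(j in K) hterm b j) * sigma jstar.
Proof.
move=> _ _ simpK [_ modeK]; have [/subsetP KV _ _] := simpK.
have gE : u *: \sum_(j in K) hterm b j = \sum_(j in K) (u * b j) *: sigma j.
  by rewrite scaler_sumr; apply: eq_bigr => j _; rewrite scalerA.
rewrite /ZG gE -!mulrA; congr (_ * _); rewrite !mulrA TG_opp_indep_sum.
apply: (simplicial_mode_transfer (@fadj_sym n) (@fadj_irr n) _ _ simpK) => [j k|j k|k|k].
- exact: fadj_commZ.
- by case/andP => _; apply: sigma_anticommZ.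
- rewrite inE => /andP[kK kV]; rewrite -[sigma jstar]scale1r; apply: sigma_commZ.
  by apply: contra kK => /(modeK k kV).
- move=> kK; rewrite -[sigma jstar]scale1r; apply: sigma_anticommZ.
  exact/(modeK k (KV k kK)).
Qed.
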